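(* Let $F_2=\langle x,y\rangle$ be the free group of rank $2$, and for $i=1,2,\ldots$ define the words $$a_i(x,y)=y^{(x y^i)^{2} x^{-1}}\, y^{-x}\in F_2 .$$ Let $G=\langle a_1,a_2,\ldots \mid r_1,r_2,\ldots\rangle$ be an arbitrary countable group given by generators and defining relations, where each relator $r_s$ is a group word in finitely many of the letters, say $r_s=r_s(a_{i_{s,1}},\ldots,a_{i_{s,k_s}})$. For each $s$ let $$r'_s(x,y)=r_s\big(a_{i_{s,1}}(x,y),\ldots,a_{i_{s,k_s}}(x,y)\big)\in F_2$$ be the word obtained by substituting $a_{i}(x,y)$ for every occurrence of $a_{i}$ in $r_s$. Then the map $\gamma: a_i\mapsto a_i(x,y)$, $i=1,2,\ldots$, defines an injective embedding of $G$ into the $2$-generator group $$T_G=\langle x,y \mid r'_1(x,y),\ r'_2(x,y),\ldots\rangle .$$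
   Context: Notation: $u^v=v^{-1}uv$ and $u^{-v}=(u^{-1})^v$. *)

From mathcomp Require Import all_boot.
Set Implicit Arguments. Unset Strict Implicit. Unset Printing Implicit Defensive.

(* A group word over the alphabet A: a letter (a, false) is a, (a, true) is a^-1. *)
Definition word (A : Type) := seq (A * bool).

Definition winv {A : Type} (w : word A) : word A :=
  rev (map (fun p => (p.1, ~~ p.2)) w).

(* u^v = v^-1 u v *)
Definition wconj {A : Type} (u v : word A) : word A := winv v ++ u ++ v.

Fixpoint wpow {A : Type} (u : word A) (n : nat) : word A :=
  match n with 0 => [::] | n'.+1 => u ++ wpow u n' end.

Definition wsubst {A B : Type} (f : A -> word B) (w : word A) : word B :=
  flatten (map (fun p => if p.2 then winv (f p.1) else f p.1) w).

Inductive pres_eq {A : Type} (R : word A -> Prop) : word A -> word A -> Prop :=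
| pe_refl w : pres_eq R w w
| pe_sym u v : pres_eq R u v -> pres_eq R v u
| pe_trans u v w : pres_eq R u v -> pres_eq R v w -> pres_eq R u w
| pe_cancel u a b w : pres_eq R (u ++ [:: (a, b); (a, ~~ b)] ++ w) (u ++ w)
| pe_rel u r w : R r -> pres_eq R (u ++ r ++ w) (u ++ w).

Inductive gen2 := gx | gy.
Definition wx : word gen2 := [:: (gx, false)].
Definition wy : word gen2 := [:: (gy, false)].

Definition a_word (i : nat) : word gen2 :=
  wconj wy (wpow (wx ++ wpow wy i) 2 ++ winv wx) ++ wconj (winv wy) wx.

(* The generators of G are a_1, a_2, ...; the letter n : nat stands for a_(n+1). *)
Definition gamma (n : nat) : word gen2 := a_word n.+1.

Definition TG_rel (R : word nat -> Prop) : word gen2 -> Prop :=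
  fun w => exists2 r, R r & w = wsubst gamma r.

From Stdlib Require Import ZArith Lia Setoid Morphisms.
From mathcomp Require Import all_boot.
Set Implicit Arguments. Unset Strict Implicit. Unset Printing Implicit Defensive.

(* Only the backward implication has content.  We let F_2 act on a set of
   states built from G (elements of G being words modulo the relators R) in
   such a way that every r'_s acts trivially, while a_i(x, y) acts as right
   multiplication of a G-valued register by a_i.  Hence gamma(u) = gamma(v) in
   T_G forces u = v in G.

   A state is a level in Z, moved by x, together with an accumulator in G, a
   head position in Z and a tape Z -> G.  The letter y acts only at levels -1
   (multiply the accumulator by the cell under the head), 0 (move the head),
   1 (move the head left and multiply every cell m on the left by
   a_(k-m-1) a_(k-m)^-1, where k is the old head and a_j = 1 for j <= 0) and
   2 (the inverse of level 1).  At level 0, a_i(x, y) pushes i factors that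
   telescope to a_i in the cell under the head, reads that cell, and undoes
   everything but the reading; at every other level its letters cancel in
   pairs. *)

#[local] Hint Resolve pe_refl : core.

Lemma winv_cat (A : Type) (u v : word A) : winv (u ++ v) = winv v ++ winv u.
Proof. by rewrite /winv map_cat rev_cat. Qed.

Lemma winvK (A : Type) : involutive (@winv A).
Proof.
move=> u; rewrite /winv map_rev revK -map_comp.
by rewrite -[RHS]map_id; apply: eq_map => -[a b] /=; rewrite negbK.
Qed.

Lemma wpowSr (A : Type) (u : word A) n : wpow u n.+1 = wpow u n ++ u.
Proof. by elim: n => [|n IH]; rewrite /= ?cats0 // -catA -IH. Qed.

Lemma winv_wpow (A : Type) (u : word A) n : winv (wpow u n) = wpow (winv u) n.
Proof. by elim: n => //= n IH; rewrite winv_cat IH -wpowSr. Qed.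

Lemma wsubst_cat (A B : Type) (f : A -> word B) u v :
  wsubst f (u ++ v) = wsubst f u ++ wsubst f v.
Proof. by rewrite /wsubst map_cat flatten_cat. Qed.

Section Presentations.

Variables (A : Type) (R : word A -> Prop).

#[global] Instance pres_eq_Equivalence : Equivalence (pres_eq R).
Proof. by split; [exact: pe_refl | exact: pe_sym | exact: pe_trans]. Qed.

Lemma pres_eq_in_context p q x y :
  pres_eq R x y -> pres_eq R (p ++ x ++ q) (p ++ y ++ q).
Proof.
elim=> {x y} [w|u v _ IH|u v w _ IH1 _ IH2|u a b w|u r w Rr].
- reflexivity.
- by symmetry.
- by transitivity (p ++ v ++ q).
- have := pe_cancel R (p ++ u) a b (w ++ q).
  by rewrite -!catA.
- have := pe_rel (p ++ u) (w ++ q) Rr.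
  by rewrite -!catA.
Qed.

#[global] Instance cat_pres_eq_Proper :
  Proper (pres_eq R ==> pres_eq R ==> pres_eq R) (@cat (A * bool)).
Proof.
move=> x y Exy x' y' Exy'; transitivity (y ++ x').
  exact: (pres_eq_in_context [::] x' Exy).
by have := pres_eq_in_context y [::] Exy'; rewrite !cats0.
Qed.

Lemma pres_eq_relator r : R r -> pres_eq R r [::].
Proof. by move=> Rr; have := pe_rel [::] [::] Rr; rewrite cats0. Qed.

Lemma pres_eq_mulV x : pres_eq R (x ++ winv x) [::].
Proof.
elim: x => [|[a b] x IH]; first reflexivity.
rewrite -cat1s winv_cat -catA (catA x) IH.
exact: (pe_cancel R [::] a b [::]).
Qed.

Lemma pres_eq_Vmul x : pres_eq R (winv x ++ x) [::].
Proof. by have := pres_eq_mulV (winv x); rewrite winvK. Qed.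

#[global] Instance winv_pres_eq_Proper : Proper (pres_eq R ==> pres_eq R) (@winv A).
Proof.
move=> x y; elim=> {x y} [w|u v _ IH|u v w _ IH1 _ IH2|u a b w|u r w Rr].
- reflexivity.
- by symmetry.
- by transitivity (winv v).
- rewrite !winv_cat -catA.
  have -> : winv [:: (a, b); (a, ~~ b)] = [:: (a, b); (a, ~~ b)].
    by rewrite /winv /= negbK.
  exact: pe_cancel.
- have Er : pres_eq R (winv r) [::].
    transitivity (winv r ++ r); last exact: pres_eq_Vmul.
    by symmetry; have := pres_eq_in_context (winv r) [::] (pres_eq_relator Rr); rewrite !cats0.
  by rewrite !winv_cat Er cats0.
Qed.

End Presentations.

Lemma pres_eq_wsubst (A B : Type) (R : word A -> Prop) (Q : word B -> Prop)
    (f : A -> word B) u v :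
  (forall r, R r -> Q (wsubst f r)) ->
  pres_eq R u v -> pres_eq Q (wsubst f u) (wsubst f v).
Proof.
move=> RQ; elim=> {u v} [w|u v _ IH|u v w _ IH1 _ IH2|u a b w|u r w Rr].
- reflexivity.
- by symmetry.
- by transitivity (wsubst f v).
- rewrite !wsubst_cat; case: b; rewrite /wsubst /= cats0.
    by rewrite pres_eq_Vmul.
  by rewrite pres_eq_mulV.
- by rewrite !wsubst_cat (pres_eq_relator (RQ r Rr)).
Qed.

Section PresentationActions.

Context {S : Type} (eqS : S -> S -> Prop) `{Equivalence S eqS}.

Definition wact (A : Type) (act : A * bool -> S -> S) (w : word A) (s : S) : S :=
  foldl (fun s l => act l s) s w.

Lemma wact_cat (A : Type) (act : A * bool -> S -> S) u v s :
  wact act (u ++ v) s = wact act v (wact act u s).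
Proof. exact: foldl_cat. Qed.

Variables (A : Type) (act : A * bool -> S -> S).
Hypothesis act_Proper : forall l, Proper (eqS ==> eqS) (act l).
Hypothesis act_invK : forall a b s, eqS (act (a, ~~ b) (act (a, b) s)) s.

#[local] Instance wact_Proper w : Proper (eqS ==> eqS) (wact act w).
Proof. by elim: w => [|l w IH] s t Est //=; apply: IH; apply: act_Proper. Qed.

Lemma wact_pres_eq (R : word A -> Prop) u v :
  (forall r s, R r -> eqS (wact act r s) s) ->
  pres_eq R u v -> forall s, eqS (wact act u s) (wact act v s).
Proof.
move=> Rtriv; elim=> {u v} [w|u v _ IH|u v w _ IH1 _ IH2|u a b w|u r w Rr] s.
- reflexivity.
- by symmetry.
- by transitivity (wact act v s).
- by rewrite !wact_cat; apply: wact_Proper; apply: act_invK.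
- by rewrite !wact_cat; apply: wact_Proper; apply: Rtriv.
Qed.

Lemma wact_wsubst (B : Type) (f : B -> word A) (act' : B * bool -> S -> S) u s :
  (forall b s, eqS (wact act (f b) s) (act' (b, false) s)) ->
  (forall b s, eqS (act' (b, false) (act' (b, true) s)) s) ->
  eqS (wact act (wsubst f u) s) (wact act' u s).
Proof.
move=> f_act act'_invK.
have letter_act b (e : bool) t :
    eqS (wact act (if e then winv (f b) else f b) t) (act' (b, e) t).
  case: e; last exact: f_act.
  transitivity (wact act (winv (f b)) (wact act (f b) (act' (b, true) t))).
    by apply: wact_Proper; symmetry; rewrite f_act; apply: act'_invK.
  rewrite -wact_cat.
  by apply: (wact_pres_eq (R := fun _ => False) (v := [::]) _ (pres_eq_mulV _ _)).
elim: u s => [|[a e] u IH] s /=; first reflexivity.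
rewrite /wsubst /= -/(wsubst f u) wact_cat letter_act IH; reflexivity.
Qed.

End PresentationActions.

#[global] Instance iter_Proper (T : Type) (r : T -> T -> Prop) (f : T -> T) n :
  Proper (r ==> r) f -> Proper (r ==> r) (iter n f).
Proof. by move=> f_Proper; elim: n => [|n IH] x y Exy //=; apply: f_Proper; apply: IH. Qed.

Lemma iter_id (T : Type) n (x : T) : iter n (fun y => y) x = x.
Proof. by elim: n => //= n ->. Qed.

Lemma iter_invK (T : Type) (r : T -> T -> Prop) `{Equivalence T r} (f g : T -> T)
  `{!Proper (r ==> r) g} :
  (forall x, r (g (f x)) x) -> forall n x, r (iter n g (iter n f x)) x.
Proof.
move=> gfK; elim=> [|n IH] x; first reflexivity.
by rewrite iterSr iterS gfK IH; reflexivity.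
Qed.

(* [gen j] is the generator a_j of G as a word, with a_0 = 1 (recall that the
   letter j stands for a_(j+1)). *)
Definition gen (j : nat) : word nat := if j is j'.+1 then [:: (j', false)] else [::].

Definition push_factor (m k : Z) : word nat :=
  if Z.to_nat (k - m) is j.+1 then gen j ++ winv (gen j.+1) else [::].

Record cfg := Cfg { acc : word nat; head : Z; cells : Z -> word nat }.

Definition with_acc (h : word nat) (c : cfg) : cfg := Cfg h (head c) (cells c).

Definition read (b : bool) (c : cfg) : cfg :=
  let x := cells c (head c) in with_acc (acc c ++ if b then winv x else x) c.

Definition move (b : bool) (c : cfg) : cfg :=
  Cfg (acc c) (if b then Z.pred (head c) else Z.succ (head c)) (cells c).

Definition push (b : bool) (c : cfg) : cfg :=
  if b then
    let k := Z.succ (head c) in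
    Cfg (acc c) k (fun m => winv (push_factor m k) ++ cells c m)
  else Cfg (acc c) (Z.pred (head c)) (fun m => push_factor m (head c) ++ cells c m).

Arguments read : simpl never.
Arguments move : simpl never.
Arguments push : simpl never.

Definition ystep (k : Z) : bool -> cfg -> cfg :=
  match k with
  | (-1)%Z => read
  | 0%Z => move
  | 1%Z => push
  | 2%Z => fun b => push (~~ b)
  | _ => fun _ c => c
  end.

Definition state := (Z * cfg)%type.

Definition xy_act (l : gen2 * bool) (s : state) : state :=
  match l with
  | (gx, b) => (if b then Z.pred s.1 else Z.succ s.1, s.2)
  | (gy, b) => (s.1, ystep s.1 b s.2)
  end.

Definition acc_mul (w : word nat) (s : state) : state :=
  if (s.1 =? 0)%Z then (s.1, with_acc (acc s.2 ++ w) s.2) else s.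

Definition acc_act (l : nat * bool) : state -> state := acc_mul [:: l].

Lemma ystep_out k : (k < -1 \/ 2 < k)%Z -> ystep k = fun _ c => c.
Proof. by case: k => [|[p|[p|p|]|]|[p|p|]] //=; lia. Qed.

Lemma iter_move b n c :
  iter n (move b) c =
  Cfg (acc c) ((if b then Z.sub else Z.add) (head c) (Z.of_nat n)) (cells c).
Proof.
elim: n => [|n IH]; first by case: c => h k t; case: b; rewrite /= ?Z.sub_0_r ?Z.add_0_r.
by rewrite iterS {}IH /move /=; congr Cfg; case: b; lia.
Qed.

Lemma iter_push_with_acc b n h c :
  iter n (push b) (with_acc h c) = with_acc h (iter n (push b) c).
Proof. by elim: n => //= n ->; case: b. Qed.

Lemma acc_iter_push b n c : acc (iter n (push b) c) = acc c.
Proof. by case: b; elim: n => //= n ->. Qed.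

Lemma head_iter_push n c : head (iter n (push true) c) = (head c + Z.of_nat n)%Z.
Proof. by elim: n => [|n IH] /=; rewrite ?IH; lia. Qed.

Lemma wact_acc_act u s : wact acc_act u s = acc_mul u s.
Proof.
elim: u s => [|l u IH] [k c] /=; rewrite ?IH /acc_act /acc_mul /=.
  by case: (k =? 0)%Z; rewrite ?cats0; case: c.
by case: (Z.eqb_spec k 0) => [->|/Z.eqb_neq ->] //=; rewrite -catA.
Qed.

Section Model.

Variable R : word nat -> Prop.

Definition cfg_eq (c d : cfg) : Prop :=
  [/\ pres_eq R (acc c) (acc d), head c = head d &
      forall m, pres_eq R (cells c m) (cells d m)].

Definition state_eq (s t : state) : Prop := s.1 = t.1 /\ cfg_eq s.2 t.2.

#[global] Instance cfg_eq_Equivalence : Equivalence cfg_eq.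
Proof.
split=> [c | c d [? ? ?] | c d e [? ? ?] [? ? ?]]; split=> //.
- by symmetry.
- by symmetry.
- by transitivity (acc d).
- by congruence.
- by move=> m; transitivity (cells d m).
Qed.

#[global] Instance state_eq_Equivalence : Equivalence state_eq.
Proof.
split=> [s | s t [? ?] | s t u [? ?] [? ?]]; split; try congruence.
- reflexivity.
- by symmetry.
- by transitivity t.2.
Qed.

#[global] Instance with_acc_Proper : Proper (pres_eq R ==> cfg_eq ==> cfg_eq) with_acc.
Proof. by move=> h h' Eh c d [_ Ehead Ecells]; split. Qed.

#[global] Instance read_Proper b : Proper (cfg_eq ==> cfg_eq) (read b).
Proof.
move=> c d [Eacc Ehead Ecells]; rewrite /read -Ehead.
by apply: with_acc_Proper => //; case: b; rewrite Eacc Ecells.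
Qed.

#[global] Instance move_Proper b : Proper (cfg_eq ==> cfg_eq) (move b).
Proof. by move=> c d [Eacc Ehead Ecells]; split; rewrite //= Ehead. Qed.

#[global] Instance push_Proper b : Proper (cfg_eq ==> cfg_eq) (push b).
Proof.
move=> c d [Eacc Ehead Ecells].
by case: b; split; rewrite //= ?Ehead // => m; rewrite Ecells.
Qed.

#[global] Instance ystep_Proper k b : Proper (cfg_eq ==> cfg_eq) (ystep k b).
Proof. by case: k => [|[p|[p|p|]|]|[p|p|]] /=; apply: _. Qed.

Lemma read_invK b c : cfg_eq (read (~~ b) (read b c)) c.
Proof.
split=> //=; rewrite -catA; case: b => /=.
  by rewrite pres_eq_Vmul cats0.
by rewrite pres_eq_mulV cats0.
Qed.

Lemma move_invK b c : cfg_eq (move (~~ b) (move b c)) c.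
Proof. by case: b; split=> //=; lia. Qed.

Lemma push_invK b c : cfg_eq (push (~~ b) (push b c)) c.
Proof.
case: b; split; rewrite /= ?Z.succ_pred ?Z.pred_succ // => m.
  by rewrite catA pres_eq_mulV.
by rewrite catA pres_eq_Vmul.
Qed.

Lemma ystep_invK k b c : cfg_eq (ystep k (~~ b) (ystep k b c)) c.
Proof.
case: k => [|[p|[p|p|]|]|[p|p|]] /=;
  by [exact: read_invK | exact: move_invK | exact: push_invK | reflexivity].
Qed.

Lemma cells_iter_push n c :
  pres_eq R (cells (iter n (push true) c) (head c)) (gen n ++ cells c (head c)).
Proof.
elim: n => [|n IH]; first reflexivity.
rewrite iterS [cells (push _ _) _]/= head_iter_push IH.
have -> : push_factor (head c) (Z.succ (head c + Z.of_nat n)) = gen n ++ winv (gen n.+1).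
  by rewrite /push_factor (_ : _ - _ = Z.of_nat n.+1)%Z ?Nat2Z.id //; lia.
by rewrite winv_cat winvK -!catA (catA (winv _)) pres_eq_Vmul.
Qed.

Lemma a_word_level0 i c :
  cfg_eq (read true (iter i (push false) (iter i (move false) (read false
            (iter i (move true) (iter i (push true) c))))))
         (with_acc (acc c ++ gen i) c).
Proof.
set c1 := iter i (push true) c.
have head_c1 : head c1 = (head c + Z.of_nat i)%Z by exact: head_iter_push.
have -> : iter i (move false) (read false (iter i (move true) c1)) =
          with_acc (acc c ++ cells c1 (head c)) c1.
  by rewrite !iter_move /= head_c1 Z.add_simpl_r acc_iter_push /with_acc head_c1.
rewrite iter_push_with_acc (iter_invK (push_invK true)) /read /= cells_iter_push.
by split=> //=; rewrite -!catA pres_eq_mulV cats0.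
Qed.

Lemma a_word_level_neq0 i n c : n <> 0%Z ->
  cfg_eq (ystep (Z.pred n) true (iter i (ystep (Z.succ n) false) (iter i (ystep n false)
            (ystep (Z.pred n) false (iter i (ystep n true) (iter i (ystep (Z.succ n) true) c))))))
         c.
Proof.
move=> n0.
have [->|n1] := Z.eq_dec n 1.
  by rewrite /= !(iter_invK (push_invK false)) (move_invK false).
have [->|n2] := Z.eq_dec n 2.
  rewrite /= !iter_id -[push false _]iterS -[push true _]iterS.
  exact: (iter_invK (push_invK false)).
have [->|n3] := Z.eq_dec n 3.
  by rewrite /= !iter_id (push_invK true).
rewrite ystep_out /=; last lia.
by rewrite (iter_invK (ystep_invK n true)) (iter_invK (ystep_invK (Z.succ n) true)).
Qed.

Lemma a_word_letters i :
  a_word i =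
  [:: (gx, false)] ++ wpow [:: (gy, true)] i ++ [:: (gx, true)] ++ wpow [:: (gy, true)] i ++
  [:: (gx, true); (gy, false); (gx, false)] ++ wpow wy i ++ [:: (gx, false)] ++ wpow wy i ++
  [:: (gx, true); (gx, true); (gy, true); (gx, false)].
Proof.
rewrite /a_word /wconj !winv_cat winvK winv_wpow.
have -> : winv wx = [:: (gx, true)] by [].
have -> : winv wy = [:: (gy, true)] by [].
by rewrite /= cats0; do ![rewrite -!catA /=].
Qed.

Lemma wact_a_word i n c :
  wact xy_act (a_word i) (n, c) =
  (n, ystep (Z.pred n) true (iter i (ystep (Z.succ n) false) (iter i (ystep n false)
        (ystep (Z.pred n) false (iter i (ystep n true) (iter i (ystep (Z.succ n) true) c)))))).
Proof.
have wact_ypow k b m d :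
    wact xy_act (wpow [:: (gy, b)] m) (k, d) = (k, iter m (ystep k b) d).
  by elim: m d => //= m IH d; rewrite IH -iterSr.
rewrite a_word_letters !wact_cat; do !rewrite /= wact_ypow.
by rewrite /= !(Z.pred_succ, Z.succ_pred).
Qed.

#[global] Instance xy_act_Proper l : Proper (state_eq ==> state_eq) (xy_act l).
Proof. by case: l => [[] b] [k c] [k' d] [/= <- Ecd]; split=> //=; rewrite Ecd. Qed.

Lemma xy_act_invK l b s : state_eq (xy_act (l, ~~ b) (xy_act (l, b) s)) s.
Proof.
case: s => k c; case: l; split=> //=; last exact: ystep_invK.
by case: b => /=; lia.
Qed.

Lemma wact_a_word_acc_mul i s :
  state_eq (wact xy_act (a_word i) s) (acc_mul (gen i) s).
Proof.
case: s => n c; rewrite wact_a_word /acc_mul /=.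
case: (Z.eqb_spec n 0) => [->|n0]; split=> //=.
  exact: a_word_level0.
exact: a_word_level_neq0.
Qed.

Lemma wact_wsubst_gamma u s :
  state_eq (wact xy_act (wsubst gamma u) s) (acc_mul u s).
Proof.
rewrite -wact_acc_act; apply: wact_wsubst => [|j t|j [k c]].
- exact: xy_act_invK.
- exact: wact_a_word_acc_mul.
- rewrite /acc_act /acc_mul /=.
  case: (Z.eqb_spec k 0) => [->|/Z.eqb_neq ->] /=; last reflexivity.
  split=> //; split=> //=.
  by have := pe_cancel R (acc c) j true [::]; rewrite !cats0 -catA.
Qed.

Lemma wact_TG_rel r s : TG_rel R r -> state_eq (wact xy_act r s) s.
Proof.
case=> r0 Rr0 ->; rewrite wact_wsubst_gamma.
case: s => k c; rewrite /acc_mul /=; case: ifP => _; last reflexivity.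
by split=> //=; rewrite (pres_eq_relator Rr0) cats0.
Qed.

End Model.

Theorem theorem1p1 (R : word nat -> Prop) (u v : word nat) :
  pres_eq R u v <-> pres_eq (TG_rel R) (wsubst gamma u) (wsubst gamma v).
Proof.
split; first by apply: pres_eq_wsubst => r Rr; exists r.
move=> /(wact_pres_eq (@xy_act_Proper R) (@xy_act_invK R) (@wact_TG_rel R)).
move=> /(_ (0%Z, Cfg [::] 0%Z (fun _ => [::]))).
by rewrite !wact_wsubst_gamma => -[_ []].
Qed.
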